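(* Let $N$ be a power of $4$ and let $S_N$ be the STOne matrix: $S_4=\frac12\begin{pmatrix}-1&1&1&1\\ 1&-1&1&1\\ 1&1&-1&1\\ 1&1&1&-1\end{pmatrix}$ and $S_{4^{k+1}}=S_4\otimes S_{4^k}$ for $k\ge1$ (Kronecker product). Let $v\in\mathbb{R}^N$, let $\mu=\mathrm{Mean}(v)\,1_N$, and define $e=S_Nv-\mu$, so that the $i$-th entry of $S_Nv$ equals $\mu_i+e(i)$. Then $\mathrm{Mean}(e)=0$ and $\mathrm{Var}(e)=\mathrm{Var}(v)$.
   Context: For $x\in\mathbb{R}^N$, $\mathrm{Mean}(x)=\frac1N\sum_{i=1}^N x_i$ and $\mathrm{Var}(x)=\frac1N\sum_{i=1}^N (x_i-\mathrm{Mean}(x))^2$. $1_N$ is the all-ones vector in $\mathbb{R}^N$. *)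

From mathcomp Require Import all_boot all_order all_algebra.
From mathcomp Require Export mxtens.
Set Implicit Arguments. Unset Strict Implicit. Unset Printing Implicit Defensive.
Import Order.TTheory GRing.Theory Num.Theory.
Local Open Scope ring_scope.

Definition STOne4 (R : fieldType) : 'M[R]_4 :=
  \matrix_(i < 4, j < 4) (if i == j then - 1 else 1) / 2%:R.

(* STOne k is S_{4^(k+1)}: S_4 for k = 0, and S_4 (x) S_{4^(k+1)} (Kronecker
   product, mxtens.tensmx, standard index order i*n+j) for k+1. *)
Fixpoint STOne (R : fieldType) (k : nat) : 'M[R]_(4 ^ k.+1) :=
  match k return 'M[R]_(4 ^ k.+1) with
  | 0 => castmx (esym (expn1 4), esym (expn1 4)) (STOne4 R)
  | k'.+1 => castmx (esym (expnS 4 k'.+1), esym (expnS 4 k'.+1))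
                    (tensmx (STOne4 R) (STOne R k'))
  end.

Definition Mean (R : fieldType) (N : nat) (x : 'cV[R]_N) : R :=
  (\sum_(i < N) x i 0) / N%:R.

Definition Var (R : fieldType) (N : nat) (x : 'cV[R]_N) : R :=
  (\sum_(i < N) (x i 0 - Mean x) ^+ 2) / N%:R.

Definition ones (R : fieldType) (N : nat) : 'cV[R]_N := const_mx 1.

(* The mean and variance of a vector are unchanged by any orthogonal matrix A
   fixing the all-ones vector: A^T also fixes 1_N, so A preserves the sum of
   the entries, and A maps the centred vector v - Mean(v) 1_N to the centred
   vector of A v, preserving its Euclidean norm.  S_4 is symmetric, involutive
   and has row sums 1, and both properties pass to Kronecker products, hence
   to every S_N.  Subtracting the constant vector Mean(v) 1_N then shifts the
   mean to 0 and leaves the variance unchanged. *)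
From mathcomp Require Import all_boot all_order all_algebra ring.
Import Order.TTheory GRing.Theory Num.Theory.
Set Implicit Arguments. Unset Strict Implicit.
Local Open Scope ring_scope.

Definition orthogonal_fixing_ones (R : comPzRingType) n (A : 'M[R]_n) : Prop :=
  A^T *m A = 1%:M /\ A *m const_mx 1 = const_mx 1 :> 'cV_n.

Lemma trmx_fixing_ones (R : comPzRingType) n (A : 'M[R]_n) :
  orthogonal_fixing_ones A -> A^T *m const_mx 1 = const_mx 1 :> 'cV_n.
Proof. by case=> AtA A1; rewrite -{1}A1 mulmxA AtA mul1mx. Qed.

Section MeanVar.
Variables (R : fieldType) (N : nat).
Implicit Types (x : 'cV[R]_N) (A : 'M[R]_N).

Lemma sum_colE x : \sum_(i < N) x i 0 = ((ones R N)^T *m x) 0 0.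
Proof. by rewrite !mxE; apply: eq_bigr => i _; rewrite !mxE mul1r. Qed.

Lemma sum_sqr_colE x : \sum_(i < N) x i 0 ^+ 2 = (x^T *m x) 0 0.
Proof. by rewrite !mxE; apply: eq_bigr => i _; rewrite !mxE expr2. Qed.

Lemma VarE x :
  Var x = ((x - Mean x *: ones R N)^T *m (x - Mean x *: ones R N)) 0 0 / N%:R.
Proof.
rewrite /Var -sum_sqr_colE; congr (_ / _).
by apply: eq_bigr => i _; rewrite !mxE mulr1.
Qed.

Lemma Mean_mulmx A x : A^T *m ones R N = ones R N -> Mean (A *m x) = Mean x.
Proof.
move=> At1; have rowA : (ones R N)^T *m A = (ones R N)^T.
  by rewrite -{2}At1 trmx_mul trmxK.
by rewrite /Mean !sum_colE mulmxA rowA.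
Qed.

Lemma Var_mulmx A x : orthogonal_fixing_ones A -> Var (A *m x) = Var x.
Proof.
move=> orthA; have [AtA A1] := orthA.
have centred : A *m x - Mean x *: ones R N = A *m (x - Mean x *: ones R N).
  by rewrite mulmxBr -scalemxAr A1.
rewrite !VarE Mean_mulmx ?trmx_fixing_ones // centred.
by rewrite trmx_mul mulmxA -(mulmxA _ A^T) AtA mulmx1.
Qed.

Hypothesis N_neq0 : N%:R != 0 :> R.

Lemma Mean_subc x c : Mean (x - c *: ones R N) = Mean x - c.
Proof.
rewrite /Mean (eq_bigr (fun i => x i 0 - c)) => [|i _]; last by rewrite !mxE mulr1.
by rewrite sumrB sumr_const card_ord mulrBl -[c *+ N]mulr_natr mulfK.
Qed.

Lemma Var_subc x c : Var (x - c *: ones R N) = Var x.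
Proof.
rewrite /Var Mean_subc; congr (_ / _); apply: eq_bigr => i _.
by rewrite !mxE mulr1 opprB addrA subrK.
Qed.

End MeanVar.

Section OrthogonalFixingOnes.
Variable R : comPzRingType.

Lemma orthogonal_fixing_ones_cast m n (e : m = n) (A : 'M[R]_m) :
  orthogonal_fixing_ones A -> orthogonal_fixing_ones (castmx (e, e) A).
Proof. by case: n / e; rewrite castmx_id. Qed.

Lemma tensmx11 m n : (1%:M : 'M[R]_m) *t (1%:M : 'M[R]_n) = 1%:M.
Proof.
apply/matrixP=> i j.
case: (mxtens_indexP i) => i0 i1; case: (mxtens_indexP j) => j0 j1.
rewrite tensmxE !mxE (inj_eq (can_inj (@mxtens_indexK m n))) xpair_eqE.
by case: (i0 == j0); case: (i1 == j1); rewrite ?mulr1 ?mulr0 ?mul0r.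
Qed.

Lemma tensmx_const1 m n :
  (const_mx 1 : 'cV[R]_m) *t (const_mx 1 : 'cV[R]_n) = const_mx 1.
Proof. by apply/matrixP=> i j; rewrite !mxE mulr1. Qed.

Lemma orthogonal_fixing_ones_tens m n (A : 'M[R]_m) (B : 'M[R]_n) :
  orthogonal_fixing_ones A -> orthogonal_fixing_ones B ->
  orthogonal_fixing_ones (A *t B).
Proof.
move=> [AtA A1] [BtB B1]; split.
  by rewrite trmx_tens tensmx_mul AtA BtB tensmx11.
have := tensmx_mul A B (const_mx 1 : 'cV_m) (const_mx 1 : 'cV_n).
by rewrite A1 B1 !tensmx_const1.
Qed.

End OrthogonalFixingOnes.

(* [STOne4] divides by the scalar matrix [2%:M]: [/] there is matrix inversion. *)
Lemma STOne4E (R : fieldType) :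
  STOne4 R = \matrix_(i < 4, j < 4) ((if i == j then - 1 else 1) / 2%:R).
Proof.
rewrite /STOne4; have -> : (2%:R : 'M[R]_4)^-1 = (2%:R^-1)%:M.
  by rewrite -invmx_scalar rmorphMn.
rewrite -[LHS]/(_ *m _) mul_mx_scalar.
by apply/matrixP=> i j; rewrite !mxE mulrC.
Qed.

Lemma STOne4_orthogonal_fixing_ones (R : numFieldType) :
  orthogonal_fixing_ones (STOne4 R).
Proof.
have two_neq0 : 2%:R != 0 :> R by rewrite pnatr_eq0.
rewrite STOne4E; split; apply/matrixP=> i j;
  rewrite !mxE !big_ord_recl big_ord0 !mxE.
  by case: i => [[|[|[|[|i]]]] Hi] //; case: j => [[|[|[|[|j]]]] Hj] //=; field.
by case: i => [[|[|[|[|i]]]] Hi] //=; field.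
Qed.

Lemma STOne_orthogonal_fixing_ones (R : numFieldType) k :
  orthogonal_fixing_ones (STOne R k).
Proof.
elim: k => [|k IHk] /=; apply: orthogonal_fixing_ones_cast.
  exact: STOne4_orthogonal_fixing_ones.
exact: orthogonal_fixing_ones_tens (STOne4_orthogonal_fixing_ones R) IHk.
Qed.

Theorem lemma1 (R : realFieldType) (k : nat) (v : 'cV[R]_(4 ^ k.+1)) :
  let mu := Mean v *: ones R (4 ^ k.+1) in
  let e := STOne R k *m v - mu in
  Mean e = 0 /\ Var e = Var v.
Proof.
move=> mu e.
have orthS := STOne_orthogonal_fixing_ones R k.
have N_neq0 : (4 ^ k.+1)%:R != 0 :> R by rewrite pnatr_eq0 expn_eq0.
split; first by rewrite Mean_subc // Mean_mulmx ?trmx_fixing_ones // subrr.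
by rewrite Var_subc // Var_mulmx.
Qed.
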